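(* Let $\mathcal{Q}=\{-1,0,1\}$ and, for $t\in\mathbb{R}$, let $[t]_{\mathcal{Q}}=\arg\min_{z\in\mathcal{Q}}|t-z|$ (nearest rounding), applied coordinatewise to vectors in $\mathbb{R}^d$. Fix $\boldsymbol{w}\in\mathbb{R}^d$ and a maximal step size $\eta>0$. Consider the greedy procedure: $\boldsymbol{r}_1=\boldsymbol{w}$, and for $i=1,2,\dots$ (until termination, i.e. until the residual becomes $\boldsymbol{0}$), $$a_i^*=\arg\min_{a\in G_i}\left\|\boldsymbol{r}_i-a\left[\tfrac{\boldsymbol{r}_i}{a}\right]_{\mathcal{Q}}\right\|,\qquad \tilde{\boldsymbol{w}}_i^*=\left[\tfrac{\boldsymbol{r}_i}{a_i^*}\right]_{\mathcal{Q}},\qquad \boldsymbol{r}_{i+1}=\boldsymbol{r}_i-a_i^*\tilde{\boldsymbol{w}}_i^*,$$ where the grid search range is $G_i=\{k\gamma_i : k\in\mathbb{Z}_{>0},\ k\gamma_i\le 2(2^{2-1}-1)\|\boldsymbol{r}_i\|\}$ with step size $\gamma_i>0$. Assume that $\gamma_i\le\min(\Delta_{\boldsymbol{r}_i},\eta)$ for every step $i$ before termination. Let $\ell(\boldsymbol{r},a,\boldsymbol{v})=\|\boldsymbol{r}-a\boldsymbol{v}\|$. Then there is a constant $c>0$ such that $$\ell(\boldsymbol{r}_i,a_i^*,\tilde{\boldsymbol{w}}_i^* )=\mathcal{O}\left(\exp(-ci)+\eta\right).$$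
   Context: $\|\cdot\|$ denotes the Euclidean norm. For $\boldsymbol{t}=(t_1,\dots,t_d)\in\mathbb{R}^d$, the minimal gap of $\boldsymbol{t}$ is $\Delta_{\boldsymbol{t}}=\min\left\{\frac{\left|\,|t_i|-|t_j|\,\right|}{2} : i,j\in\{1,\dots,d\},\ t_i\neq t_j\right\}$. This is the case of bit-width $b=2$ of the $b$-bit quantization set, i.e. the grid $[-1:\epsilon_b:1]$ with $\epsilon_b=1/(2^{b-1}-1)$. *)

From HB Require Import structures.
From mathcomp Require Import all_boot all_order all_algebra.
From mathcomp Require Import reals.
From mathcomp Require Import sequences.
Set Implicit Arguments. Unset Strict Implicit. Unset Printing Implicit Defensive.
Import Order.TTheory GRing.Theory Num.Theory.
Local Open Scope ring_scope.

Section Defs.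
Variable R : realType.

Definition enorm {d : nat} (v : 'rV[R]_d) : R := Num.sqrt (\sum_(j < d) v 0 j ^+ 2).

Definition inQ (z : R) : Prop := z = -1 \/ z = 0 \/ z = 1.

(* q is a nearest rounding to Q: q t is an argmin over Q of |t - z|
   (any tie-breaking convention is allowed). *)
Definition nearest_rounding (q : R -> R) : Prop :=
  forall t, inQ (q t) /\ (forall z, inQ z -> `|t - q t| <= `|t - z|).

Definition roundQ (q : R -> R) {d : nat} (v : 'rV[R]_d) : 'rV[R]_d :=
  \row_j q (v 0 j).

Definition loss {d : nat} (r : 'rV[R]_d) (a : R) (v : 'rV[R]_d) : R :=
  enorm (r - a *: v).

Definition in_grid {d : nat} (gamma : R) (r : 'rV[R]_d) (a : R) : Prop :=
  exists k : nat, (0 < k)%N /\ a = k%:R * gamma /\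
    a <= 2%:R * (2%:R ^+ (2 - 1) - 1) * enorm r.

(* gamma <= Delta_t, where Delta_t is the minimum of ||t_i|-|t_j||/2 over pairs
   with t_i <> t_j (the minimum over an empty set being +infinity). *)
Definition le_min_gap {d : nat} (gamma : R) (t : 'rV[R]_d) : Prop :=
  forall i j : 'I_d, t 0 i != t 0 j -> gamma <= `| `|t 0 i| - `|t 0 j| | / 2%:R.

(* step i (1-based) is performed: no residual r_1..r_i is zero *)
Definition alive {d : nat} (r : nat -> 'rV[R]_d) (i : nat) : Prop :=
  forall j, (0 < j)%N -> (j <= i)%N -> r j != 0.

Definition greedy_run {d : nat} (q : R -> R) (w : 'rV[R]_d) (gamma : nat -> R)
  (r : nat -> 'rV[R]_d) (a : nat -> R) (v : nat -> 'rV[R]_d) : Prop :=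
  r 1%N = w /\
  forall i, (0 < i)%N -> alive r i ->
    [/\ in_grid (gamma i) (r i) (a i),
        (forall b, in_grid (gamma i) (r i) b ->
           loss (r i) (a i) (roundQ q ((a i)^-1 *: r i))
             <= loss (r i) b (roundQ q (b^-1 *: r i))),
        v i = roundQ q ((a i)^-1 *: r i) &
        r i.+1 = r i - a i *: v i].

End Defs.

From mathcomp Require Import all_boot all_order all_algebra.
From mathcomp Require Import reals.
From mathcomp Require Import sequences exp.
From mathcomp Require Import ring lra.
Import Order.TTheory GRing.Theory Num.Theory.
Local Open Scope ring_scope.
Set Implicit Arguments. Unset Strict Implicit.

(* Rounding [t / b] to {-1, 0, 1} costs at most [|t|] in a coordinate (round
   to 0), and at most [|t| - b] when [b <= |t|] (round to the sign of [t]).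
   Taking for [b] the grid point just below the largest coordinate [M] of the
   residual [r], whose square is at least [||r||^2 / d], the optimal grid scale
   yields [||r'||^2 <= ||r||^2 - M^2 + gamma^2 <= (1 - 1/d) ||r||^2 + gamma^2],
   hence [||r'|| <= (1 - 1/(2d)) ||r|| + d gamma].  Since the loss of step [i]
   is [||r_(i+1)||] and [gamma <= eta], unrolling this affine recursion gives
   [||w|| (1 - 1/(2d))^i + 2 d^2 eta]. *)

Lemma ler_sqr_norm (R : realDomainType) (x y : R) :
  `|x| <= `|y| -> x ^+ 2 <= y ^+ 2.
Proof.
move=> xy; rewrite -(real_normK (num_real x)) -(real_normK (num_real y)).
by rewrite lerXn2r ?nnegrE.
Qed.

Lemma le_contraction_of_sqr (R : realFieldType) (s M g x u : R) :
  0 <= s -> 0 <= g -> 0 <= x -> 0 <= u <= 2 ->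
  u * s ^+ 2 <= M ^+ 2 -> x ^+ 2 <= s ^+ 2 - M ^+ 2 + g ^+ 2 ->
  x <= (1 - u / 2) * s + g.
Proof.
move=> s0 g0 x0 /andP[u0 u2] uM xM.
have rhs0 : 0 <= (1 - u / 2) * s + g by rewrite addr_ge0 // mulr_ge0 //; lra.
rewrite -ler_sqr ?nnegrE //; apply: le_trans xM _.
have -> : ((1 - u / 2) * s + g) ^+ 2
          = s ^+ 2 - u * s ^+ 2 + g ^+ 2 + (2 * ((1 - u / 2) * s * g) + (u / 2 * s) ^+ 2).
  by field.
have cross : 0 <= (1 - u / 2) * s * g by rewrite !mulr_ge0 //; lra.
have := sqr_ge0 (u / 2 * s); lra.
Qed.

Lemma geometric_recursion_le (R : realFieldType) (x : nat -> R) (rho beta : R)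
    (n : nat) :
  0 <= rho < 1 -> 0 <= beta ->
  (forall k, (k < n)%N -> x k.+1 <= rho * x k + beta) ->
  x n <= rho ^+ n * x 0 + beta / (1 - rho).
Proof.
move=> /andP[rho0 rho1] beta0; elim: n => [|n IHn] rec.
  by rewrite expr0 mul1r lerDl divr_ge0 // subr_ge0 ltW.
apply: le_trans (rec n (ltnSn n)) _.
have {}IHn := IHn (fun k kn => rec k (ltnW kn)).
have -> : rho ^+ n.+1 * x 0 + beta / (1 - rho)
          = rho * (rho ^+ n * x 0 + beta / (1 - rho)) + beta.
  by rewrite exprS; field; rewrite subr_eq0 gt_eqF.
by rewrite lerD2r ler_wpM2l.
Qed.

Lemma invnS_half_gt0_le1 (R : realFieldType) (n : nat) :
  0 < (n.+1%:R : R)^-1 / 2 <= 1.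
Proof.
rewrite divr_gt0 ?invr_gt0 ?ltr0n //= ler_pdivrMr // mul1r.
by rewrite (le_trans _ (ler1n R 2)) // invf_le1 ?ltr0n // ler1n.
Qed.

Lemma expr1B_le_expRN (R : realType) (c : R) (n : nat) :
  c <= 1 -> (1 - c) ^+ n <= expR (- (c * n%:R)).
Proof.
move=> c1; rewrite -mulNr expRM_natr lerXn2r ?nnegrE ?subr_ge0 //.
  exact: ltW (expR_gt0 _).
exact: expR_ge1Dx.
Qed.

Section GreedyStep.
Variable R : realType.

Lemma alive_leq d (r : nat -> 'rV[R]_d) i j : alive r i -> (j <= i)%N -> alive r j.
Proof. by move=> alive_i ji k k0 kj; apply: alive_i => //; exact: leq_trans kj ji. Qed.

Lemma enorm_ge0 d (v : 'rV[R]_d) : 0 <= enorm v.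
Proof. exact: sqrtr_ge0. Qed.

Lemma sqr_enorm d (v : 'rV[R]_d) : enorm v ^+ 2 = \sum_j v 0 j ^+ 2.
Proof. by rewrite sqr_sqrtr // sumr_ge0 // => j _; exact: sqr_ge0. Qed.

Lemma enorm_rV0 (v : 'rV[R]_0) : enorm v = 0.
Proof. by rewrite /enorm big_ord0 sqrtr0. Qed.

Lemma normr_coord_le_enorm d (v : 'rV[R]_d) j : `|v 0 j| <= enorm v.
Proof.
rewrite -ler_sqr ?nnegrE ?enorm_ge0 // real_normK ?num_real // sqr_enorm.
by rewrite (bigD1 j) //= lerDl sumr_ge0 // => i _; exact: sqr_ge0.
Qed.

Lemma sqr_enorm_le_max d (v : 'rV[R]_d) M :
  (forall j, `|v 0 j| <= M) -> enorm v ^+ 2 <= d%:R * M ^+ 2.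
Proof.
move=> vM; rewrite sqr_enorm (_ : d%:R * M ^+ 2 = \sum_(j < d) M ^+ 2); last first.
  by rewrite sumr_const card_ord mulr_natl.
apply: ler_sum => j _; apply: ler_sqr_norm.
by rewrite (ger0_norm (le_trans (normr_ge0 _) (vM j))).
Qed.

Lemma exists_max_coord n (v : 'rV[R]_n.+1) :
  exists j0, forall j, `|v 0 j| <= `|v 0 j0|.
Proof.
have real_norm j : `|v 0 j| \is Num.real by exact: num_real.
case: (@real_arg_maxP R _ ord0 predT (fun j => `|v 0 j|) isT (in1W real_norm)).
by move=> j0 _ j0max; exists j0 => j; exact: j0max.
Qed.

Lemma exists_grid_point_below (gamma M : R) :
  0 < gamma -> gamma <= M ->
  exists2 k : nat, (0 < k)%N & k%:R * gamma <= M < k%:R * gamma + gamma.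
Proof.
move=> g0 gM; have Mg0 : 0 <= M / gamma by rewrite divr_ge0 // (le_trans (ltW g0)).
exists (Num.truncn (M / gamma)).
  by rewrite truncn_gt0 ler_pdivlMr // mul1r.
rewrite -ler_pdivlMr // truncn_le Mg0 /=.
by rewrite -[X in _ + X]mul1r -mulrDl -ltr_pdivrMr // natr1 truncnS_gt.
Qed.

Variables (q : R -> R) (q_nearest : nearest_rounding q).

Lemma sqr_loss_roundQ d (r : 'rV[R]_d) b :
  loss r b (roundQ q (b^-1 *: r)) ^+ 2 = \sum_j (r 0 j - b * q (b^-1 * r 0 j)) ^+ 2.
Proof. by rewrite /loss sqr_enorm; apply: eq_bigr => j _; rewrite !mxE. Qed.

Lemma roundQ_err_le b t z :
  0 < b -> inQ z -> `|t - b * q (b^-1 * t)| <= `|t - b * z|.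
Proof.
move=> b0 Qz.
have scale y : t - b * y = b * (b^-1 * t - y).
  by rewrite mulrBr mulrA mulfV ?gt_eqF // mul1r.
rewrite !scale !normrM (gtr0_norm b0) ler_pM2l //.
by case: (q_nearest (b^-1 * t)) => _ /(_ z Qz).
Qed.

Lemma roundQ_err_le_norm b t : 0 < b -> `|t - b * q (b^-1 * t)| <= `|t|.
Proof.
by move=> b0; have := roundQ_err_le t b0 (or_intror (or_introl erefl)); rewrite mulr0 subr0.
Qed.

Lemma roundQ_err_le_gap b t :
  0 < b -> b <= `|t| -> `|t - b * q (b^-1 * t)| <= `|t| - b.
Proof.
move=> b0 bt; have [t0|t0] := leP 0 t.
  have := roundQ_err_le t b0 (or_intror (or_intror erefl)).
  by rewrite (ger0_norm t0) in bt *; rewrite mulr1 (@ger0_norm _ (t - b)) // subr_ge0.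
have := roundQ_err_le t b0 (or_introl erefl).
by rewrite (ltr0_norm t0) in bt *; rewrite mulrN1 opprK (@ler0_norm _ (t + b)); lra.
Qed.

Lemma loss_roundQ_le_enorm d (r : 'rV[R]_d) b :
  0 < b -> loss r b (roundQ q (b^-1 *: r)) <= enorm r.
Proof.
move=> b0; rewrite -ler_sqr ?nnegrE ?enorm_ge0 // sqr_loss_roundQ sqr_enorm.
by apply: ler_sum => j _; apply: ler_sqr_norm; rewrite roundQ_err_le_norm.
Qed.

Lemma sqr_loss_roundQ_le_coord d (r : 'rV[R]_d) b gamma j0 :
  0 < b -> b <= `|r 0 j0| <= b + gamma ->
  loss r b (roundQ q (b^-1 *: r)) ^+ 2 <= enorm r ^+ 2 - r 0 j0 ^+ 2 + gamma ^+ 2.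
Proof.
move=> b0 /andP[bj0 j0g].
rewrite sqr_loss_roundQ sqr_enorm (bigD1 j0) //= [X in _ <= X - _ + _](bigD1 j0) //=.
have err_j0 : (r 0 j0 - b * q (b^-1 * r 0 j0)) ^+ 2 <= gamma ^+ 2.
  apply: ler_sqr_norm; rewrite (@ger0_norm _ gamma); last by lra.
  by apply: le_trans (roundQ_err_le_gap b0 bj0) _; lra.
have err_rest : \sum_(j | j != j0) (r 0 j - b * q (b^-1 * r 0 j)) ^+ 2
                <= \sum_(j | j != j0) r 0 j ^+ 2.
  by apply: ler_sum => j _; apply: ler_sqr_norm; rewrite roundQ_err_le_norm.
lra.
Qed.

Lemma enorm_le_of_max_le n (v : 'rV[R]_n.+1) M gamma :
  (forall j, `|v 0 j| <= M) -> M <= gamma -> enorm v <= n.+1%:R * gamma.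
Proof.
move=> vM Mg; have M0 : 0 <= M := le_trans (normr_ge0 _) (vM ord0).
have g0 := le_trans M0 Mg.
rewrite -ler_sqr ?nnegrE ?enorm_ge0 ?mulr_ge0 // exprMn.
apply: le_trans (sqr_enorm_le_max vM) _.
apply: le_trans (_ : _ <= n.+1%:R * gamma ^+ 2) _.
  by rewrite ler_wpM2l // ler_sqr.
by rewrite ler_wpM2r ?sqr_ge0 // expr2 ler_peMr // ler1n.
Qed.

Lemma exists_grid_loss_le n (r : 'rV[R]_n.+1) gamma j0 :
  0 < gamma -> (forall j, `|r 0 j| <= `|r 0 j0|) -> gamma <= `|r 0 j0| ->
  exists2 b, in_grid gamma r b &
    loss r b (roundQ q (b^-1 *: r)) <= (1 - (n.+1%:R)^-1 / 2) * enorm r + gamma.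
Proof.
move=> g0 j0max gM; set M := `|r 0 j0| in j0max gM *.
have [k k0 /andP[bM Mb]] := exists_grid_point_below g0 gM.
have b0 : 0 < k%:R * gamma by rewrite mulr_gt0 ?ltr0n.
have Mr : M <= enorm r := normr_coord_le_enorm r j0.
exists (k%:R * gamma).
  by exists k; split=> //; split=> //; rewrite expr1; lra.
apply: (le_contraction_of_sqr (M := M)); rewrite ?enorm_ge0 ?(ltW g0) //.
- by rewrite invr_ge0 ler0n (le_trans _ (ler1n R 2)) // invf_le1 ?ltr0n // ler1n.
- by rewrite ler_pdivrMl ?ltr0n // sqr_enorm_le_max.
- rewrite real_normK ?num_real //.
  by apply: sqr_loss_roundQ_le_coord; rewrite ?bM ?ltW.
Qed.

Lemma greedy_step_contraction n (r : 'rV[R]_n.+1) gamma a :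
  0 < gamma -> in_grid gamma r a ->
  (forall b, in_grid gamma r b ->
     loss r a (roundQ q (a^-1 *: r)) <= loss r b (roundQ q (b^-1 *: r))) ->
  loss r a (roundQ q (a^-1 *: r))
    <= (1 - (n.+1%:R)^-1 / 2) * enorm r + n.+1%:R * gamma.
Proof.
move=> g0 a_grid a_opt; have [j0 j0max] := exists_max_coord r.
have [Mg|gM] := leP `|r 0 j0| gamma.
  have [k [k0 [-> _]]] := a_grid.
  apply: le_trans (loss_roundQ_le_enorm r _) _; first by rewrite mulr_gt0 ?ltr0n.
  have := enorm_le_of_max_le j0max Mg; have := enorm_ge0 r.
  have /andP[] := invnS_half_gt0_le1 R n; set c := _ / 2; clearbody c.
  move=> c0 c1 s0 sDg; have : c * enorm r <= 1 * enorm r by apply: ler_wpM2r.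
  lra.
have [b b_grid b_loss] := exists_grid_loss_le g0 j0max (ltW gM).
apply: le_trans (a_opt b b_grid) (le_trans b_loss _).
by rewrite lerD2l ler_peMl ?(ltW g0) // ler1n.
Qed.

End GreedyStep.

Section GreedyRun.
Variables (R : realType) (n : nat) (w : 'rV[R]_n.+1) (eta : R) (gamma : nat -> R).
Variables (q : R -> R) (r : nat -> 'rV[R]_n.+1) (a : nat -> R) (v : nat -> 'rV[R]_n.+1).
Hypotheses (eta_ge0 : 0 <= eta) (q_nearest : nearest_rounding q).
Hypothesis step_sizes :
  forall i, (0 < i)%N -> alive r i -> 0 < gamma i /\ gamma i <= eta.
Hypothesis run : greedy_run q w gamma r a v.

Lemma greedy_run_step i : alive r i.+1 ->
  enorm (r i.+2) <= (1 - (n.+1%:R)^-1 / 2) * enorm (r i.+1) + n.+1%:R * eta.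
Proof.
move=> alive_i; have [_ /(_ i.+1 isT alive_i) [grid_a a_opt -> ->]] := run.
have [g0 g_eta] := step_sizes (ltn0Sn i) alive_i.
apply: le_trans (greedy_step_contraction q_nearest g0 grid_a a_opt) _.
by rewrite lerD2l ler_wpM2l.
Qed.

Lemma greedy_run_enorm_le i : alive r i.+1 ->
  enorm (r i.+2)
    <= (1 - (n.+1%:R)^-1 / 2) ^+ i.+1 * enorm w + 2 * n.+1%:R ^+ 2 * eta.
Proof.
move=> alive_i; set D : R := n.+1%:R.
have D0 : 0 < D by rewrite ltr0n.
have rho_bounds : 0 <= 1 - D^-1 / 2 < 1.
  have /andP[c0 c1] := invnS_half_gt0_le1 R n.
  by rewrite subr_ge0 c1 ltrBlDr ltrDl c0.
have := @geometric_recursion_le _ (fun k => enorm (r k.+1)) _ (D * eta) i.+1 rho_bounds.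
rewrite /= (proj1 run) subKr (_ : D * eta / (D^-1 / 2) = 2 * D ^+ 2 * eta); last first.
  by field; rewrite addrC natr1 pnatr_eq0.
apply; first by rewrite mulr_ge0 // ltW.
by move=> k ki; apply: greedy_run_step; apply: alive_leq alive_i _.
Qed.

End GreedyRun.

Theorem theorem1 (R : realType) (d : nat) (w : 'rV[R]_d) :
  exists c : R, 0 < c /\ exists C : R, 0 < C /\
  forall (eta : R) (gamma : nat -> R) (q : R -> R)
         (r : nat -> 'rV[R]_d) (a : nat -> R) (v : nat -> 'rV[R]_d),
    0 < eta ->
    nearest_rounding q ->
    (forall i, (0 < i)%N -> alive r i ->
       [/\ 0 < gamma i, le_min_gap (gamma i) (r i) & gamma i <= eta]) ->
    greedy_run q w gamma r a v ->
    forall i, (0 < i)%N -> alive r i ->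
      loss (r i) (a i) (v i) <= C * (expR (- (c * i%:R)) + eta).
Proof.
case: d w => [|n] w.
  exists 1; split=> //; exists 1; split=> // eta gamma q r a v eta0 _ _ _ i _ _.
  by rewrite /loss enorm_rV0 mul1r addr_ge0 ?(ltW eta0) ?(ltW (expR_gt0 _)).
set D : R := n.+1%:R; have D0 : 0 < D by rewrite ltr0n.
exists (D^-1 / 2); split; first by rewrite divr_gt0 ?invr_gt0.
exists (enorm w + 2 * D ^+ 2).
split; first by rewrite ltr_pwDr ?enorm_ge0 // mulr_gt0 // exprn_gt0.
move=> eta gamma q r a v eta0 q_nearest step_sizes run [//|i] _ alive_i.
rewrite /loss; have [_ /(_ i.+1 isT alive_i) [_ _ _ <-]] := run.
have sizes k : (0 < k)%N -> alive r k -> 0 < gamma k /\ gamma k <= eta.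
  by move=> k0 /(step_sizes k k0) [].
apply: le_trans (greedy_run_enorm_le (ltW eta0) q_nearest sizes run alive_i) _.
have /andP[_ c1] := invnS_half_gt0_le1 R n.
have := expr1B_le_expRN i.+1 c1; rewrite -/D.
set rho := _ ^+ i.+1; set E := expR _ => rho_E.
have rho_E_w : rho * enorm w <= E * enorm w by rewrite ler_wpM2r ?enorm_ge0.
have w_eta : 0 <= enorm w * eta by rewrite mulr_ge0 ?enorm_ge0 ?(ltW eta0).
have D_E : 0 <= D ^+ 2 * E by rewrite mulr_ge0 ?sqr_ge0 ?(ltW (expR_gt0 _)).
clearbody rho E D; rewrite mulrDl !mulrDr; lra.
Qed.
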